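(* Let $(\mathcal A,\mathcal B,\mathcal E)$ and $P$ be as in the context with $P(\mathcal A\cup\mathcal B)>0$, and let $(\mathcal A^+,\mathcal A^-,\mathcal B^+,\mathcal B^-,z)$ be any output of $\mathsf{LinOpt}(\mathcal A,\mathcal B,\mathcal E,P)$. Then: 1. $P(\mathcal A^+)P(\mathcal B^+)\ge P(\mathcal A^-)P(\mathcal B^-)$. 2. If $P(\mathcal A^+)P(\mathcal B^+)=P(\mathcal A^-)P(\mathcal B^-)$, then (a) $\mathbf 1^{\top}z=P(\mathcal A\cup\mathcal B)$; (b) $\frac{P(\mathcal A)}{P(\mathcal A\cup\mathcal B)}(M^{\top}z)_v=P(\{v\})$ for all $v\in\mathcal A$; (c) $\frac{P(\mathcal B)}{P(\mathcal A\cup\mathcal B)}(M^{\top}z)_v=P(\{v\})$ for all $v\in\mathcal B$.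
   Context: $\mathcal A,\mathcal B$ are disjoint finite sets, $\mathcal E\subseteq\mathcal A\times\mathcal B$, and $P:\mathcal A\cup\mathcal B\to[0,\infty)$ is a weight function with $P(S)=\sum_{v\in S}P(\{v\})$. Let $E\in\mathbb R^{\mathcal E\times(\mathcal A\cup\mathcal B)}$ be the edge incidence matrix of the bipartite graph ($E_{e,w}=1$ if $w$ is an endpoint of $e$, else $0$) and $M=\begin{pmatrix}E\\ I\end{pmatrix}$, rows indexed by $\mathcal E\sqcup(\mathcal A\cup\mathcal B)$. Define $r\in\mathbb R^{\mathcal A\cup\mathcal B}$ by: if $P(\mathcal A)>0$ and $P(\mathcal B)>0$, $r_v=P(\{v\})P(\mathcal A\cup\mathcal B)/P(\mathcal A)$ for $v\in\mathcal A$ and $r_v=P(\{v\})P(\mathcal A\cup\mathcal B)/P(\mathcal B)$ for $v\in\mathcal B$; otherwise $r_v=P(\{v\})$. $\mathsf{LinOpt}(\mathcal A,\mathcal B,\mathcal E,P)$ takes an optimal solution $y\in\{0,1\}^{\mathcal A\cup\mathcal B}$ of the linear program $\max r^{\top}y$ s.t. $y\ge\mathbf 0$, $My\le\mathbf 1$ (an integral optimum exists) and an optimal solution $z\in\mathbb R^{\mathcal E\sqcup(\mathcal A\cup\mathcal B)}$ of the dual program $\min\mathbf 1^{\top}z$ s.t. $z\ge\mathbf 0$, $M^{\top}z\ge r$, and returns $\mathcal A^+=\{v\in\mathcal A:y_v=1\}$, $\mathcal A^-=\mathcal A\setminus\mathcal A^+$, $\mathcal B^+=\{v\in\mathcal B:y_v=1\}$,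 $\mathcal B^-=\mathcal B\setminus\mathcal B^+$, and $z$. *)

From HB Require Import structures.
From mathcomp Require Import all_boot all_order all_algebra.
Set Implicit Arguments. Unset Strict Implicit. Unset Printing Implicit Defensive.
Import Order.TTheory GRing.Theory Num.Theory.
Local Open Scope ring_scope.

Section LinOpt.
Variables (TA TB : finType) (E : {set TA * TB}) (R : realFieldType).

Definition vert := (TA + TB)%type.
Definition Aset : {set vert} := [set v | if v is inl _ then true else false].
Definition Bset : {set vert} := [set v | if v is inr _ then true else false].

Definition edge := {e : TA * TB | e \in E}.

Definition rowidx := (edge + vert)%type.

Variable P : vert -> R.
Definition PS (S : {set vert}) : R := \sum_(v in S) P v.

Definition rw (v : vert) : R :=
  if (0 < PS Aset) && (0 < PS Bset) then
    match v with
    | inl _ => P v * PS setT / PS Aset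
    | inr _ => P v * PS setT / PS Bset
    end
  else P v.

(* edge incidence matrix E and M = (E ; I) *)
Definition incE (e : edge) (w : vert) : R :=
  match w with
  | inl a => ((val e).1 == a)%:R
  | inr b => ((val e).2 == b)%:R
  end.
Definition Mmx (i : rowidx) (w : vert) : R :=
  match i with
  | inl e => incE e w
  | inr u => (u == w)%:R
  end.

Definition My (y : vert -> R) (i : rowidx) : R := \sum_w Mmx i w * y w.
Definition MTz (z : rowidx -> R) (w : vert) : R := \sum_i Mmx i w * z i.

Definition primal_feasible (y : vert -> R) : Prop :=
  (forall v, 0 <= y v) /\ (forall i, My y i <= 1).
Definition primal_obj (y : vert -> R) : R := \sum_v rw v * y v.
Definition primal_optimal (y : vert -> R) : Prop :=
  primal_feasible y /\
  forall y', primal_feasible y' -> primal_obj y' <= primal_obj y.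

Definition dual_feasible (z : rowidx -> R) : Prop :=
  (forall i, 0 <= z i) /\ (forall v, rw v <= MTz z v).
Definition dual_obj (z : rowidx -> R) : R := \sum_i z i.
Definition dual_optimal (z : rowidx -> R) : Prop :=
  dual_feasible z /\
  forall z', dual_feasible z' -> dual_obj z <= dual_obj z'.

Definition LinOpt_output (Ap Am Bp Bm : {set vert}) (z : rowidx -> R) : Prop :=
  exists y : vert -> R,
    [/\ forall v, y v = 0 \/ y v = 1,
        primal_optimal y,
        dual_optimal z,
        Ap = [set v in Aset | y v == 1] /\ Am = Aset :\: Ap
      & Bp = [set v in Bset | y v == 1] /\ Bm = Bset :\: Bp].

End LinOpt.

Arguments LinOpt_output {TA TB} E {R} P Ap Am Bp Bm z.
Arguments MTz {TA TB E R} z w.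
Arguments dual_obj {TA TB E R} z.
Arguments PS {TA TB R} P S.

From HB Require Import structures.
From mathcomp Require Import all_boot all_order all_algebra.
From mathcomp Require Import ring lra.
Set Implicit Arguments. Unset Strict Implicit. Unset Printing Implicit Defensive.
Import Order.TTheory GRing.Theory Num.Theory.
Local Open Scope ring_scope.

(* On each side X in {A, B} the weight r is P
      rescaled by a common factor; the indicator of X is primal feasible and,
      when P(X) > 0, its objective is P(A u B).  Comparing the optimal y
      with these two vectors yields P(A-)P(B-) <= P(A+)P(B+), with equality
      forcing r^T y = P(A u B).  Then 1^T z = P(A u B), so complementary
      slackness against the indicator of each heavy side makes the dual
      constraints there tight, which is parts (b) and (c). *)

Section Farkas.
Variable R : realFieldType.

Lemma sum_delta (I : finType) (i0 : I) (f : I -> R) :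
  \sum_i (i == i0)%:R * f i = f i0.
Proof.
rewrite (bigD1 i0) //= big1 ?addr0 ?eqxx ?mul1r // => i /negbTE ->.
by rewrite mul0r.
Qed.

(* A system of linear inequalities with rows I and unknowns J is encoded as
   c : I -> option J -> R; row i reads  \sum_j c i (Some j) * x j <= c i None. *)
Definition slack (I J : finType) (c : I -> option J -> R) (x : J -> R) i :=
  c i None - \sum_j c i (Some j) * x j.

Definition solves (I J : finType) (c : I -> option J -> R) (x : J -> R) :=
  forall i, 0 <= slack c x i.

Definition farkas_cert (I J : finType) (c : I -> option J -> R) :=
  exists lam : I -> R, [/\ forall i, 0 <= lam i,
    forall j, \sum_i lam i * c i (Some j) = 0 &
    \sum_i lam i * c i None < 0].

Definition comb (I K J : finType) (w : K -> I -> R) (c : I -> option J -> R) :=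
  fun k o => \sum_i w k i * c i o.

Lemma comb_comb (I K J : finType) (c : I -> option J -> R) (w : K -> I -> R)
    (lam : K -> R) o :
  \sum_k lam k * comb w c k o = \sum_i (\sum_k lam k * w k i) * c i o.
Proof.
rewrite /comb; under eq_bigr do rewrite mulr_sumr.
rewrite exchange_big /=; apply: eq_bigr => i _.
by rewrite mulr_suml; apply: eq_bigr => k _; rewrite mulrA.
Qed.

Lemma slack_comb (I K J : finType) (c : I -> option J -> R) (w : K -> I -> R)
    (x : J -> R) k :
  slack (comb w c) x k = \sum_i w k i * slack c x i.
Proof.
rewrite /slack /comb; under [RHS]eq_bigr do rewrite mulrBr mulr_sumr.
rewrite sumrB; congr (_ - _).
under eq_bigr do rewrite mulr_suml.
rewrite exchange_big /=; apply: eq_bigr => j _; apply: eq_bigr => i _.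
by rewrite mulrA.
Qed.

Lemma farkas_cert_comb (I K J : finType) (c : I -> option J -> R)
    (w : K -> I -> R) :
  (forall k i, 0 <= w k i) -> farkas_cert (comb w c) -> farkas_cert c.
Proof.
move=> w0 [lam [l0 lS lN]].
exists (fun i => \sum_k lam k * w k i); split.
- by move=> i; apply: sumr_ge0 => k _; apply: mulr_ge0.
- by move=> j; rewrite -comb_comb.
- by rewrite -comb_comb.
Qed.

Lemma solves_no_unknowns (I J : finType) (c : I -> option J -> R) :
  (forall i j, c i (Some j) = 0) -> ~ farkas_cert c -> solves c (fun _ => 0).
Proof.
move=> c0 nc i; rewrite /slack big1 ?subr0 => [|j _]; last by rewrite mulr0.
rewrite leNgt; apply/negP => ci; apply: nc.
exists (fun k => (k == i)%:R); split.
- by move=> k; rewrite ler0n.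
- by move=> j; rewrite sum_delta c0.
- by rewrite sum_delta.
Qed.

(* One unknown u with constraints a i * u <= g i, some a q < 0: the largest
   lower bound g q / a q is feasible, because every pair of an upper and a
   lower bound is compatible. *)
Lemma one_unknown_lower (I : finType) (a g : I -> R) q0 :
  a q0 < 0 ->
  (forall i, a i = 0 -> 0 <= g i) ->
  (forall p q, 0 < a p -> a q < 0 -> 0 <= - a q * g p + a p * g q) ->
  exists u, forall i, a i * u <= g i.
Proof.
move=> aq0 gZ gPN.
have [qm aqm qmax] :=
  @arg_maxP _ R I q0 (fun q => a q < 0) (fun q => g q / a q) aq0.
exists (g qm / a qm) => i.
have gqm : g qm = (g qm / a qm) * a qm by rewrite divfK // ltr0_neq0.
move: (g qm / a qm) gqm qmax => u gqm qmax.
case: (ltrgt0P (a i)) => ai.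
- by have := gPN _ _ ai aqm; rewrite gqm => pair_ok; nra.
- have le_i : g i / a i <= u := qmax i ai.
  have gi : g i = (g i / a i) * a i by rewrite divfK // ltr0_neq0.
  by rewrite gi; nra.
- by rewrite ai mul0r gZ.
Qed.

Lemma one_unknown (I : finType) (a g : I -> R) :
  (forall i, a i = 0 -> 0 <= g i) ->
  (forall p q, 0 < a p -> a q < 0 -> 0 <= - a q * g p + a p * g q) ->
  exists u, forall i, a i * u <= g i.
Proof.
move=> gZ gPN.
case: (boolP [exists q, a q < 0]) => [/existsP [q aq]|noneg].
  exact: one_unknown_lower aq gZ gPN.
case: (boolP [exists p, 0 < a p]) => [/existsP [p ap]|nopos]; last first.
  exists 0 => i; rewrite mulr0; case: (ltrgt0P (a i)) => ai; last exact: gZ.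
  + by case/existsP: nopos; exists i.
  + by case/existsP: noneg; exists i.
have [|||u Hu] := @one_unknown_lower I (fun i => - a i) g p.
- by rewrite oppr_lt0.
- by move=> i /eqP; rewrite oppr_eq0 => /eqP; apply: gZ.
- move=> i j; rewrite oppr_gt0 oppr_lt0 opprK => ai aj.
  by rewrite addrC; apply: gPN.
by exists (- u) => i; rewrite mulrN -mulNr.
Qed.

(* Fourier-Motzkin weights eliminating the unknown with coefficients a: keep
   each row with a i = 0, and pair every row with a p > 0 with every row
   with a q < 0, scaled so that the coefficient of the unknown cancels. *)
Definition fm_weights (I : finType) (a : I -> R) (k : I + I * I) (i : I) : R :=
  match k with
  | inl i' => ((a i' == 0) && (i == i'))%:R
  | inr (p, q) => if (0 < a p) && (a q < 0) then
                    (i == p)%:R * - a q + (i == q)%:R * a p else 0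
  end.

Lemma fm_weights_ge0 (I : finType) (a : I -> R) k i : 0 <= fm_weights a k i.
Proof.
case: k => [i'|[p q]] /=; first by rewrite ler0n.
case: ifP => // /andP [ap aq].
by apply: addr_ge0; apply: mulr_ge0; rewrite ?ler0n // ?oppr_ge0 ltW.
Qed.

Lemma fm_weights_keep (I : finType) (a h : I -> R) i' :
  \sum_i fm_weights a (inl i') i * h i = (a i' == 0)%:R * h i'.
Proof.
rewrite -(sum_delta i' (fun i => (a i' == 0)%:R * h i)); apply: eq_bigr => i _.
rewrite /=; case: (a i' == 0); case: (i == i');
  by rewrite /= ?mul1r ?mul0r ?mulr0 ?mulr1.
Qed.

Lemma fm_weights_pair (I : finType) (a h : I -> R) p q :
  \sum_i fm_weights a (inr (p, q)) i * h i =
  if (0 < a p) && (a q < 0) then - a q * h p + a p * h q else 0.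
Proof.
rewrite /=; case: ifP => _; last by rewrite big1 // => i _; rewrite mul0r.
under eq_bigr do rewrite mulrDl -!mulrA.
by rewrite big_split /= !sum_delta.
Qed.

Lemma fm_weights_cancel (I : finType) (a : I -> R) k :
  \sum_i fm_weights a k i * a i = 0.
Proof.
case: k => [i'|[p q]]; rewrite ?fm_weights_keep ?fm_weights_pair.
  by case: eqP => [->|_]; rewrite ?mulr0 ?mul0r.
by case: ifP => // _; rewrite mulrC addrC mulrN mulrC subrr.
Qed.

Lemma slack_shift (I J : finType) (c : I -> option J -> R) x j u i :
  slack c (fun j' => x j' + (j' == j)%:R * u) i = slack c x i - c i (Some j) * u.
Proof.
rewrite /slack; under eq_bigr do rewrite mulrDr mulrCA.
by rewrite big_split /= sum_delta opprD addrA.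
Qed.

(* Induction on a set S of unknowns outside of
   which all coefficients vanish, eliminating one unknown at a time. *)
Lemma farkas_solvable_support (J : finType) n (S : {set J}) :
  #|S| = n -> forall (I : finType) (c : I -> option J -> R),
  (forall i j, j \notin S -> c i (Some j) = 0) -> ~ farkas_cert c ->
  exists x, solves c x.
Proof.
elim: n S => [|n IH] S cS I c cS0 nc.
  exists (fun _ => 0); apply: solves_no_unknowns nc => i j.
  by apply: cS0; move/eqP: cS; rewrite cards_eq0 => /eqP ->; rewrite inE.
have [j jS] : exists j, j \in S by apply/card_gt0P; rewrite cS.
pose a i := c i (Some j).
pose d := comb (fm_weights a) c.
have dS0 : forall k j', j' \notin S :\ j -> d k (Some j') = 0.
  move=> k j'; rewrite !inE negb_and negbK => /orP [/eqP ->|j'S].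
    exact: fm_weights_cancel.
  by rewrite /d /comb big1 // => i _; rewrite cS0 ?mulr0.
have cS' : #|S :\ j| = n by apply/eqP; rewrite -eqSS -cS (cardsD1 j S) jS.
have nd : ~ farkas_cert d
  by move=> cd; apply: nc; apply: farkas_cert_comb cd; apply: fm_weights_ge0.
have [x' dx'] := IH _ cS' _ d dS0 nd.
have [u Hu] : exists u, forall i, a i * u <= slack c x' i.
  apply: one_unknown => [i ai0|p q ap aq].
    by have := dx' (inl i); rewrite /d slack_comb fm_weights_keep ai0 eqxx mul1r.
  by have := dx' (inr (p, q)); rewrite /d slack_comb fm_weights_pair ap aq.
exists (fun j' => x' j' + (j' == j)%:R * u) => i.
by rewrite slack_shift subr_ge0 Hu.
Qed.

Theorem farkas (I J : finType) (c : I -> option J -> R) :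
  ~ farkas_cert c -> exists x, solves c x.
Proof. by apply: (@farkas_solvable_support J _ setT erefl) => i j; rewrite inE. Qed.

End Farkas.

Section Duality.
Variables (TA TB : finType) (E : {set TA * TB}) (R : realFieldType).
Variable P : vert TA TB -> R.

Lemma My_vertex (y : vert TA TB -> R) u : My (E:=E) y (inr u) = y u.
Proof.
rewrite -(sum_delta u y); apply: eq_bigr => w _ /=.
by rewrite eq_sym.
Qed.

Lemma pairing_transpose (y : vert TA TB -> R) (z : rowidx E -> R) :
  \sum_v MTz z v * y v = \sum_i z i * My y i.
Proof.
rewrite /MTz /My; under eq_bigr do rewrite mulr_suml.
rewrite exchange_big /=; apply: eq_bigr => i _; rewrite mulr_sumr.
by apply: eq_bigr => v _; rewrite mulrCA mulrA.
Qed.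

Lemma pairing_le_dual_obj (y : vert TA TB -> R) (z : rowidx E -> R) :
  primal_feasible E y -> (forall i, 0 <= z i) ->
  \sum_v MTz z v * y v <= dual_obj z.
Proof.
move=> [_ yM] z0; rewrite pairing_transpose; apply: ler_sum => i _.
by rewrite -[leRHS]mulr1; apply: ler_wpM2l.
Qed.

Lemma primal_obj_le_pairing (y : vert TA TB -> R) (z : rowidx E -> R) :
  primal_feasible E y -> dual_feasible P z ->
  primal_obj P y <= \sum_v MTz z v * y v.
Proof. by move=> [y0 _] [_ zr]; apply: ler_sum => v _; apply: ler_wpM2r. Qed.

Lemma weak_duality (y : vert TA TB -> R) (z : rowidx E -> R) :
  primal_feasible E y -> dual_feasible P z -> primal_obj P y <= dual_obj z.
Proof.
move=> hy hz; apply: le_trans (primal_obj_le_pairing hy hz) _.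
by apply: pairing_le_dual_obj => //; case: hz.
Qed.

Lemma complementary_slackness (y : vert TA TB -> R) (z : rowidx E -> R) :
  primal_feasible E y -> dual_feasible P z -> primal_obj P y = dual_obj z ->
  forall v, y v = 1 -> MTz z v = rw P v.
Proof.
move=> hy hz obj_eq v yv.
have gap0 : \sum_w (MTz z w - rw P w) * y w = 0.
  under eq_bigr do rewrite mulrBl.
  rewrite sumrB -/(primal_obj P y); apply/eqP; rewrite subr_eq0 eq_le.
  rewrite primal_obj_le_pairing // obj_eq pairing_le_dual_obj //; by case: hz.
have gap_ge0 w : true -> 0 <= (MTz z w - rw P w) * y w.
  by move=> _; apply: mulr_ge0; [rewrite subr_ge0; case: hz => _ ->|case: hy].
have := psumr_eq0P gap_ge0 gap0 (i := v) isT.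
by rewrite yv mulr1 => /eqP; rewrite subr_eq0 => /eqP.
Qed.

(* The dual constraints together with the bound  1^T z <= obj, as a system
   in the unknowns z: rows  -z_i <= 0,  -(M^T z)_v <= -r_v,  1^T z <= obj. *)
Definition dual_system (obj : R) (k : (rowidx E + vert TA TB) + 'I_1)
    (o : option (rowidx E)) : R :=
  match k, o with
  | inl (inl i), Some j => - (j == i)%:R
  | inl (inl _), None => 0
  | inl (inr v), Some j => - Mmx R j v
  | inl (inr v), None => - rw P v
  | inr _, Some _ => 1
  | inr _, None => obj
  end.

Lemma solves_dual_system obj (z : rowidx E -> R) :
  solves (dual_system obj) z -> dual_feasible P z /\ dual_obj z <= obj.
Proof.
move=> hz; split; [split|].
- move=> i; have := hz (inl (inl i)); rewrite /slack /=.
  under eq_bigr do rewrite mulNr; by rewrite sumrN sum_delta sub0r opprK.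
- move=> v; have := hz (inl (inr v)); rewrite /slack /=.
  under eq_bigr do rewrite mulNr; by rewrite sumrN opprK addrC subr_ge0.
- have := hz (inr ord0); rewrite /slack /= subr_ge0.
  by under eq_bigr do rewrite mul1r.
Qed.

Lemma dual_system_cert obj :
  farkas_cert (dual_system obj) ->
  exists t (y : vert TA TB -> R), [/\ 0 <= t, forall v, 0 <= y v,
    forall i, My (E:=E) y i <= t & t * obj < primal_obj P y].
Proof.
move=> [lam [l0 lS lN]].
pose y v := lam (inl (inr v)); pose t := lam (inr ord0).
exists t, y; split=> [||i|]; rewrite ?/t ?/y //.
- have := l0 (inl (inl i)); have := lS i.
  rewrite big_sumType big_ord1 big_sumType /= mulr1.
  have -> : \sum_k lam (inl (inl k)) * - (i == k)%:R = - lam (inl (inl i)).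
    rewrite -(sum_delta i (fun k => lam (inl (inl k)))) -sumrN.
    by apply: eq_bigr => k _; rewrite mulrN mulrC eq_sym.
  have -> : \sum_v lam (inl (inr v)) * - Mmx R i v = - My y i.
    by rewrite /My -sumrN; apply: eq_bigr => v _; rewrite mulrN mulrC.
  lra.
- move: lN; rewrite big_sumType big_ord1 big_sumType /= big1 => [|i _];
    last by rewrite mulr0.
  have -> : \sum_v lam (inl (inr v)) * - rw P v = - primal_obj P y.
    by rewrite /primal_obj -sumrN; apply: eq_bigr => v _; rewrite mulrN mulrC.
  rewrite mulrC; lra.
Qed.

Lemma optimal_no_improvement (y : vert TA TB -> R) t (y' : vert TA TB -> R) :
  primal_optimal E P y -> 0 <= t -> (forall v, 0 <= y' v) ->
  (forall i, My (E:=E) y' i <= t) -> primal_obj P y' <= t * primal_obj P y.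
Proof.
move=> [_ yopt]; rewrite le_eqVlt => /orP [/eqP t_eq0|tpos] y'0 y'M; last first.
- pose y'' v := y' v / t.
  have scale (f : vert TA TB -> R) :
      \sum_v f v * y'' v = (\sum_v f v * y' v) / t.
    by rewrite mulr_suml; apply: eq_bigr => v _; rewrite mulrA.
  have feas : primal_feasible E y''.
    split=> [v|i]; first by rewrite divr_ge0 // ltW.
    by rewrite /My scale -/(My y' i) ler_pdivrMr // mul1r.
  by have := yopt _ feas; rewrite /primal_obj scale ler_pdivrMr // mulrC.
- rewrite -t_eq0 mul0r /primal_obj big1 // => v _.
  have y'v0 : y' v <= 0 by rewrite t_eq0; have := y'M (inr v); rewrite My_vertex.
  by rewrite [y' v](@le_anti _ _ _ 0) ?mulr0 // y'v0 y'0.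
Qed.

Lemma strong_duality (y : vert TA TB -> R) :
  primal_optimal E P y ->
  exists z : rowidx E -> R, dual_feasible P z /\ dual_obj z <= primal_obj P y.
Proof.
move=> yopt.
have [|z hz] := @farkas _ _ _ (dual_system (primal_obj P y)).
  case/dual_system_cert=> t [y' [t0 y'0 y'M better]].
  by move: better; rewrite ltNge optimal_no_improvement.
by exists z; apply: solves_dual_system.
Qed.

Lemma optimal_values_eq (y : vert TA TB -> R) (z : rowidx E -> R) :
  primal_optimal E P y -> dual_optimal P z -> dual_obj z = primal_obj P y.
Proof.
move=> yopt [zfeas zopt]; have [z' [z'feas z'le]] := strong_duality yopt.
apply/le_anti; rewrite weak_duality ?andbT //; last exact: yopt.1.
exact: le_trans (zopt _ z'feas) z'le.
Qed.
End Duality.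

Section Sides.
Variables (TA TB : finType) (E : {set TA * TB}) (R : realFieldType).
Variable P : vert TA TB -> R.
Hypothesis P_ge0 : forall v, 0 <= P v.

Notation A := (Aset TA TB).
Notation B := (Bset TA TB).

Definition side (X : {set vert TA TB}) := X = A \/ X = B.

Lemma side_A : side A. Proof. by left. Qed.
Lemma side_B : side B. Proof. by right. Qed.

Definition indicator (X : {set vert TA TB}) (v : vert TA TB) : R :=
  (v \in X)%:R.

Definition rscale (X : {set vert TA TB}) : R :=
  if (0 < PS P A) && (0 < PS P B) then PS P setT / PS P X else 1.

Lemma sum_sides (f : vert TA TB -> R) :
  \sum_v f v = \sum_(v in A) f v + \sum_(v in B) f v.
Proof.
rewrite (bigID (mem A)) /=; congr (_ + _).
by apply: eq_bigl => -[x|x]; rewrite !inE.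
Qed.

Lemma PS_sides : PS P setT = PS P A + PS P B.
Proof. by rewrite /PS (eq_bigl xpredT) ?sum_sides // => v; rewrite inE. Qed.

Lemma PS_ge0 X : 0 <= PS P X.
Proof. exact: sumr_ge0. Qed.

Lemma My_edge (y : vert TA TB -> R) (e : edge E) :
  My y (inl e) = y (inl (val e).1) + y (inr (val e).2).
Proof.
rewrite /My big_sumType /=; congr (_ + _).
  rewrite -(sum_delta _ (fun x => y (inl x))).
  by apply: eq_bigr => x _; rewrite eq_sym.
rewrite -(sum_delta _ (fun x => y (inr x))).
by apply: eq_bigr => x _; rewrite eq_sym.
Qed.

(* Selecting a whole side is primal feasible: each edge meets it once. *)
Lemma side_indicator_feasible X : side X -> primal_feasible E (indicator X).
Proof.
move=> sX; split=> [v|[e|u]]; rewrite ?My_edge ?My_vertex /indicator.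
- by rewrite ler0n.
- by case: sX => ->; rewrite !inE /= ?addr0 ?add0r.
- by rewrite lern1 leq_b1.
Qed.

Lemma rw_side X v : side X -> v \in X -> rw P v = P v * rscale X.
Proof.
rewrite /rw /rscale; case: ifP => _; last by rewrite mulr1.
by case=> ->; case: v => x; rewrite inE // => _; rewrite mulrA.
Qed.

Lemma side_sum X (f : vert TA TB -> R) : side X ->
  \sum_(v in X) rw P v * f v = rscale X * \sum_(v in X) P v * f v.
Proof.
move=> sX; rewrite mulr_sumr; apply: eq_bigr => v vX.
by rewrite (rw_side sX vX) mulrAC mulrC.
Qed.

Lemma indicator_obj X :
  side X -> primal_obj P (indicator X) = rscale X * PS P X.
Proof.
move=> sX; rewrite /primal_obj (bigID (mem X)) /= [X in _ + X]big1 ?addr0.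
  rewrite (side_sum _ sX) /PS; congr (_ * _); apply: eq_bigr => v vX.
  by rewrite /indicator vX mulr1.
by move=> v /negbTE vX; rewrite /indicator vX mulr0.
Qed.

Lemma rscale_total X : side X -> 0 < PS P X -> rscale X * PS P X = PS P setT.
Proof.
move=> sX X_gt0; rewrite /rscale.
case: ifP => [_|]; first by rewrite divfK ?gt_eqF.
rewrite mul1r PS_sides; case: sX => -> in X_gt0 *; rewrite X_gt0 /= => /negbT.
  rewrite -leNgt => b_le0.
  by rewrite (@le_anti _ _ (PS P B) 0) ?addr0 ?b_le0 ?PS_ge0.
rewrite andbT -leNgt => a_le0.
by rewrite (@le_anti _ _ (PS P A) 0) ?add0r ?a_le0 ?PS_ge0.
Qed.

Lemma side_tight X (z : rowidx E -> R) : side X ->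
  dual_feasible P z -> dual_obj z = PS P setT ->
  forall v, v \in X -> PS P X / PS P setT * MTz z v = P v.
Proof.
move=> sX zfeas zobj v vX; have [X_eq0|X_gt0] := eqVneq (PS P X) 0.
  have Pv0 : P v = 0 by apply: (psumr_eq0P (fun v _ => P_ge0 v) X_eq0).
  by rewrite X_eq0 Pv0 !mul0r.
have {}X_gt0 : 0 < PS P X by rewrite lt_def X_gt0 PS_ge0.
have S_gt0 : 0 < PS P setT.
  by rewrite PS_sides; have := PS_ge0 A; have := PS_ge0 B; case: sX => X_def;
    rewrite X_def in X_gt0; lra.
rewrite (complementary_slackness (side_indicator_feasible sX) zfeas); last first.
- by rewrite /indicator vX.
- by rewrite indicator_obj // rscale_total.
rewrite (rw_side sX vX); transitivity (P v * (rscale X * PS P X) / PS P setT).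
  by ring.
by rewrite rscale_total // mulfK // gt_eqF.
Qed.

Lemma PS_selected (X : {set vert TA TB}) (y : vert TA TB -> R) :
  (forall v, y v = 0 \/ y v = 1) ->
  PS P [set v in X | y v == 1] = \sum_(v in X) P v * y v.
Proof.
move=> y01; rewrite /PS big_mkcond [RHS]big_mkcond; apply: eq_bigr => v _.
rewrite !inE; case: (v \in X) => //=.
by case: (y01 v) => ->; rewrite ?mulr0 ?mulr1 ?eqxx // eq_sym oner_eq0.
Qed.

Lemma PS_setD (X Y : {set vert TA TB}) :
  Y \subset X -> PS P (X :\: Y) = PS P X - PS P Y.
Proof.
move=> YX; rewrite /PS [\sum_(v in X) _](big_setID Y) /=.
by rewrite (setIidPr YX) addrC addrK.
Qed.

Lemma selected_weight_bounds (X : {set vert TA TB}) (y : vert TA TB -> R) :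
  primal_feasible E y -> 0 <= \sum_(v in X) P v * y v <= PS P X.
Proof.
move=> [y0 yM]; rewrite sumr_ge0 /= => [|v _]; last exact: mulr_ge0.
apply: ler_sum => v _; rewrite -[leRHS]mulr1 ler_wpM2l //.
by have := yM (inr v); rewrite My_vertex.
Qed.

(* Optimality of y against the indicator of a heavy side: y is worth at
   least P(A u B). *)
Lemma optimal_obj_ge (y : vert TA TB -> R) : primal_optimal E P y ->
  0 < PS P setT -> PS P setT <= primal_obj P y.
Proof.
move=> [_ yopt] S_gt0.
have [X sX X_gt0] : exists2 X, side X & 0 < PS P X.
  move: S_gt0; rewrite PS_sides; have := PS_ge0 A; have := PS_ge0 B.
  case: (ltrP 0 (PS P A)) => [a_gt0|a_le0]; first by exists A; first exact: side_A.
  by move=> b_ge0 a_ge0 ab_gt0; exists B; [exact: side_B|lra].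
rewrite -(rscale_total sX X_gt0) -indicator_obj //.
exact/yopt/side_indicator_feasible.
Qed.

(* In the case where both sides are heavy, the excess of the rescaled
   objective over a + b measures the gap between the two products. *)
Lemma heavy_excess (a b al be : R) : 0 < a -> 0 < b ->
  (a + b) / a * al + (a + b) / b * be - (a + b) =
  (a + b) / (a * b) * (al * be - (a - al) * (b - be)).
Proof. by move=> a_gt0 b_gt0; field; rewrite !gt_eqF. Qed.

Lemma optimal_balance (y : vert TA TB -> R) :
  primal_optimal E P y -> 0 < PS P setT ->
  let al := \sum_(v in A) P v * y v in let be := \sum_(v in B) P v * y v in
  (PS P A - al) * (PS P B - be) <= al * be /\
  (al * be = (PS P A - al) * (PS P B - be) -> primal_obj P y = PS P setT).
Proof.
move=> yopt S_gt0 al be; have obj_ge := optimal_obj_ge yopt S_gt0.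
have := selected_weight_bounds A yopt.1; rewrite -/al => /andP [al_ge0 al_le].
have := selected_weight_bounds B yopt.1; rewrite -/be => /andP [be_ge0 be_le].
have obj_y : primal_obj P y = rscale A * al + rscale B * be.
  by rewrite /primal_obj sum_sides !(side_sum _ side_A, side_sum _ side_B).
move: obj_ge; rewrite obj_y PS_sides /rscale PS_sides.
case: ifP => [/andP [a_gt0 b_gt0]|light].
  rewrite -subr_ge0 heavy_excess // pmulr_rge0 ?subr_ge0 => [prod_le|]; last first.
    by rewrite divr_gt0 ?addr_gt0 ?mulr_gt0.
  split=> // prod_eq; apply/eqP; rewrite -subr_eq0 heavy_excess //.
  by rewrite prod_eq subrr mulr0.
have [a0|b0] : PS P A = 0 \/ PS P B = 0.
  move/negbT: light; rewrite negb_and -!leNgt => /orP [] ?; [left|right];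
    by apply/le_anti/andP; split; rewrite ?PS_ge0.
- rewrite a0 in al_le *; rewrite !mul1r => obj_ge.
  have al0 : al = 0 by apply/le_anti/andP.
  by rewrite al0 in obj_ge *; rewrite subrr !mul0r; split=> [|_]; lra.
- rewrite b0 in be_le *; rewrite !mul1r => obj_ge.
  have be0 : be = 0 by apply/le_anti/andP.
  by rewrite be0 in obj_ge *; rewrite subrr !mulr0; split=> [|_]; lra.
Qed.
End Sides.

Theorem lemma4 (TA TB : finType) (E : {set TA * TB}) (R : realFieldType)
    (P : vert TA TB -> R) :
  (forall v, 0 <= P v) ->
  0 < PS P setT ->
  forall (Ap Am Bp Bm : {set vert TA TB}) (z : rowidx E -> R),
    LinOpt_output E P Ap Am Bp Bm z ->
    PS P Am * PS P Bm <= PS P Ap * PS P Bp /\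
    (PS P Ap * PS P Bp = PS P Am * PS P Bm ->
       [/\ dual_obj z = PS P setT,
           (forall v, v \in Aset TA TB ->
              PS P (Aset TA TB) / PS P setT * MTz z v = P v)
         & (forall v, v \in Bset TA TB ->
              PS P (Bset TA TB) / PS P setT * MTz z v = P v)]).
Proof.
move=> P_ge0 S_gt0 Ap Am Bp Bm z [y [y01 yopt zopt [-> ->] [-> ->]]].
have selected (X : {set vert TA TB}) : [set v in X | y v == 1] \subset X.
  by apply/subsetP => v; rewrite inE => /andP [].
rewrite !PS_setD ?selected // !PS_selected //.
have [prod_le prod_eq] := optimal_balance P_ge0 yopt S_gt0.
split=> // /prod_eq obj_S.
have dual_S : dual_obj z = PS P setT by rewrite (optimal_values_eq yopt zopt).
split=> //.
- exact: (side_tight P_ge0 (side_A TA TB) zopt.1 dual_S).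
- exact: (side_tight P_ge0 (side_B TA TB) zopt.1 dual_S).
Qed.
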